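(* Let $r\ge0$ be an integer and $T\in\overline{\mathrm{Sub}}(X,1)$ with $T\subset B(1,r)$. Let $(\Delta_1,\tau_1),(\Delta_2,\tau_2)$ be $R_N$-core graphs, $(v_1,v_2)\in V(\Delta_1)\times V(\Delta_2)$, and $\Gamma$ the connected component of $\Delta_1\times_{R_N}\Delta_2$ containing $(v_1,v_2)$. Then there exists a based $R_N$-graph isomorphism $(T,1)\to(\Gamma,(v_1,v_2))$ if and only if $T_{r+1}(v_1)\cap T_{r+1}(v_2)=T$.
   Context: $N\ge2$, $F_N$ free with free basis $A$, $X$ its Cayley graph (tree with vertex set $F_N$, unit edge lengths, metric $d_X$), $B(1,r)$ the closed ball of radius $r$ about $1$, $R_N=F_N\backslash X$ the rose. An $R_N$-graph is a graph with a graph morphism $\tau$ to $R_N$; $R_N$-graph morphisms commute with these maps; subtrees of $X$ are $R_N$-graphs via the projection $X\to R_N$. An $R_N$-core graph is a finite $R_N$-graph with $\tau$ locally injective and no vertices of degree $0$ or $1$. $\overline{\mathrm{Sub}}(X,1)$: finite subtrees of $X$ containing $1$ (including $\{1\}$). For $m\ge1$, $\mathcal{R}_m$: finite subtrees $T'\ni1$ in which $1$ has degree $\ge2$ and all degree-one vertices are at distance exactly $m$ from $1$. A based occurrence $(T',1)\to(\Delta,v)$ is an $R_N$-graph morphism sending $1\mapsto v$ and preserving degrees of vertices of degree $\ge2$ in $T'$. For an $R_N$-core graph $\Delta$ and $v\in V(\Delta)$, $T_m(v)$ denotes the unique $T'\in\mathcal{R}_m$ admitting a based occurrence $(T',1)\to(\Delta,v)$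 (the $m$-neighborhood of $v$). The fiber product $\Delta_1\times_{R_N}\Delta_2$ has vertex set $V(\Delta_1)\times V(\Delta_2)$ and an edge labeled $a$ from $(o(e_1),o(e_2))$ to $(t(e_1),t(e_2))$ for each pair of edges $e_1,e_2$ with label $a$. *)

From HB Require Import structures.
From mathcomp Require Import all_boot.
Set Implicit Arguments. Unset Strict Implicit. Unset Printing Implicit Defensive.

(* A (finite) R_N-graph: vertices, oriented edges with origin/terminus, and
   the graph morphism tau to the rose R_N, recorded as the label in 'I_N of
   each edge (R_N has one vertex and N loops, one per basis element). *)
Record RNgraph (N : nat) := RGraph {
  vert : finType;
  edge : finType;
  src : edge -> vert;
  tgt : edge -> vert;
  lab : edge -> 'I_N }.

Section Graphs.
Variable N : nat.
Implicit Types G H : RNgraph N.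

(* degree of a vertex (a loop counts twice) *)
Definition deg G (v : vert G) : nat :=
  #|[pred e : edge G | src e == v]| + #|[pred e : edge G | tgt e == v]|.

Definition loc_inj G : Prop :=
  forall e e' : edge G, lab e = lab e' ->
    (src e = src e' -> e = e') /\ (tgt e = tgt e' -> e = e').

(* R_N-core graph (finiteness is built into RNgraph) *)
Definition core_graph G : Prop :=
  loc_inj G /\ forall v : vert G, 2 <= deg v.

Definition rmorph G H (fV : vert G -> vert H) (fE : edge G -> edge H) : Prop :=
  forall e : edge G,
    [/\ src (fE e) = fV (src e), tgt (fE e) = fV (tgt e) & lab (fE e) = lab e].

Definition riso G H (fV : vert G -> vert H) (fE : edge G -> edge H) : Prop :=
  [/\ rmorph fV fE, bijective fV & bijective fE].

Definition fib_vert G H : finType := (vert G * vert H)%type.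
Definition fib_edge G H : finType :=
  {p : (edge G * edge H)%type | lab p.1 == lab p.2}.
Definition fiber_product G H : RNgraph N :=
  @RGraph N (fib_vert G H) (fib_edge G H)
    (fun p => (src (val p).1, src (val p).2))
    (fun p => (tgt (val p).1, tgt (val p).2))
    (fun p => lab (val p).1).

Definition adj G : rel (vert G) := fun x y =>
  [exists e : edge G, ((src e == x) && (tgt e == y)) || ((src e == y) && (tgt e == x))].

Definition ind_vert G (S : pred (vert G)) : finType := {x : vert G | S x}.
Definition ind_edge G (S : pred (vert G)) : finType :=
  {t : (ind_vert S * ind_vert S * edge G)%type |
     (src t.2 == val t.1.1) && (tgt t.2 == val t.1.2)}.
Definition induced G (S : pred (vert G)) : RNgraph N :=
  @RGraph N (ind_vert S) (ind_edge S)
    (fun t => (val t).1.1) (fun t => (val t).1.2) (fun t => lab (val t).2).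

Definition component G (b : vert G) : RNgraph N :=
  induced (fun x => connect (@adj G) b x).

End Graphs.

(* a letter (i, true) is the basis element a_i, (i, false) is a_i^{-1};
   vertices of X = elements of F_N = reduced words. *)
Definition letter N : finType := ('I_N * bool)%type.
Definition word N := seq (letter N).

Definition inv_pair N (x y : letter N) : bool := (x.1 == y.1) && (x.2 != y.2).
Definition reduced N (w : word N) : bool := sorted (fun x y => ~~ inv_pair x y) w.

(* right multiplication of a reduced word by the basis element a_i
   (the Cayley graph has an a_i-labelled edge from g to g a_i) *)
Definition rmul N (w : word N) (i : 'I_N) : word N :=
  if last (i, true) w == (i, false) then take (size w).-1 w
  else rcons w (i, true).

(* finite subtrees of X containing 1 (the set Sub-bar(X,1)); a subtree of a
   tree is determined by its vertex set, so it is given by a finite list of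
   reduced words, containing the empty word and closed under prefixes *)
Definition subtreeX N (T : seq (word N)) : Prop :=
  [/\ forall w, w \in T -> reduced w,
      [::] \in T &
      forall w x, rcons w x \in T -> w \in T].

Definition tree_vert N (T : seq (word N)) : finType := seq_sub T.
Definition tree_edge N (T : seq (word N)) : finType :=
  {t : (tree_vert T * tree_vert T * 'I_N)%type |
     ssval t.1.2 == rmul (ssval t.1.1) t.2}.
Definition tree_graph N (T : seq (word N)) : RNgraph N :=
  @RGraph N (tree_vert T) (tree_edge T)
    (fun t => (val t).1.1) (fun t => (val t).1.2) (fun t => (val t).2).

Definition in_Rm N (m : nat) (T : seq (word N)) : Prop :=
  [/\ subtreeX T,
      (forall x : vert (tree_graph T), ssval x = [::] -> 2 <= deg x) &
      (forall x : vert (tree_graph T), deg x = 1 -> size (ssval x) = m)].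

Definition based_occurrence N (T : seq (word N)) (D : RNgraph N) (v : vert D) : Prop :=
  exists (fV : vert (tree_graph T) -> vert D) (fE : edge (tree_graph T) -> edge D),
    [/\ rmorph fV fE,
        (forall x, ssval x = [::] -> fV x = v) &
        (forall x, 2 <= deg x -> deg (fV x) = deg x)].

Definition is_Tm N (m : nat) (D : RNgraph N) (v : vert D) (T : seq (word N)) : Prop :=
  in_Rm m T /\ based_occurrence T v.

Definition in_ball N (r : nat) (T : seq (word N)) : Prop :=
  forall w, w \in T -> size w <= r.

Definition Gamma N (D1 D2 : RNgraph N) (v1 : vert D1) (v2 : vert D2) : RNgraph N :=
  @component N (fiber_product D1 D2) ((v1, v2) : fib_vert D1 D2).

Definition based_iso_to_Gamma N (T : seq (word N)) (D1 D2 : RNgraph N)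
    (v1 : vert D1) (v2 : vert D2) : Prop :=
  exists (fV : vert (tree_graph T) -> vert (Gamma v1 v2))
         (fE : edge (tree_graph T) -> edge (Gamma v1 v2)),
    riso fV fE /\ forall x, ssval x = [::] -> val (fV x) = (v1, v2).

(* Reading reduced words from the base point identifies a finite subtree [T]
   of [X] with [Gamma] exactly when the reduced words readable from [(v1, v2)]
   are those of [T].  For [T] inside [B(1, r)] it suffices to compare words of
   length at most [r + 1]: then no readable word has length [r + 1], so
   readable words have bounded length, [Gamma] carries no nontrivial reduced
   loop (it could be pumped), and reading is injective.  Finally, in a core
   graph [T_m(v)] is the set of reduced words of length at most [m] readable
   from [v], and a word is readable from [(v1, v2)] in the fiber product iff
   it is readable from both [v1] and [v2]. *)

From Pilot Require Import Defs.
From HB Require Import structures.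
From mathcomp Require Import all_boot.
Set Implicit Arguments. Unset Strict Implicit. Unset Printing Implicit Defensive.

Section Words.
Variable N : nat.
Implicit Types (w u : word N) (x y : letter N).

Definition linv y : letter N := (y.1, ~~ y.2).

(* The reduced form of [w y]; for [y = (i, true)] this is [rmul w i]. *)
Definition wmul w y : word N :=
  if last y w == linv y then take (size w).-1 w else rcons w y.

Definition winv w : word N := rev (map linv w).

Lemma linvK : involutive linv.
Proof. by case=> a b; rewrite /linv negbK. Qed.

Lemma linv_inj : injective linv.
Proof. exact: inv_inj linvK. Qed.

Lemma linv_neq y : (linv y == y) = false.
Proof. by case: y => a b; rewrite /linv xpair_eqE eqxx; case: b. Qed.

Lemma inv_pairE x y : Defs.inv_pair x y = (y == linv x).
Proof.
by case: x => a b; case: y => c d; rewrite /Defs.inv_pair /linv xpair_eqE /= eq_sym;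
  case: b; case: d; rewrite ?andbT ?andbF.
Qed.

Lemma reduced_rcons w y : reduced (rcons w y) = reduced w && (last y w != linv y).
Proof.
case: w => [|a w] /=; first by rewrite eq_sym linv_neq.
rewrite /reduced /= rcons_path inv_pairE; congr (_ && ~~ _).
by rewrite -(inj_eq linv_inj) linvK eq_sym.
Qed.

Lemma reduced_cons y w : reduced (y :: w) = reduced w && (head y w != linv y).
Proof.
case: w => [|b w] /=; first by rewrite eq_sym linv_neq.
by rewrite /reduced /= inv_pairE andbC.
Qed.

Lemma reduced_rcons_cat w y u :
  reduced (rcons w y ++ u) = reduced (rcons w y) && reduced (y :: u).
Proof. by case: w => [|a w] //; rewrite /reduced /= cat_path last_rcons. Qed.

Lemma wmul_rconsK w y : wmul (rcons w y) (linv y) = w.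
Proof.
rewrite /wmul !last_rcons linvK eqxx size_rcons /=.
by rewrite -cats1 take_cat ltnn subnn take0 cats0 ?cats1.
Qed.

Lemma wmul_rcons w y : reduced (rcons w y) -> wmul w y = rcons w y.
Proof. by rewrite reduced_rcons /wmul => /andP[_ /negbTE ->]. Qed.

Lemma wmul_cancel w y : last y w = linv y -> w = rcons (wmul w y) (linv y).
Proof.
case/lastP: w => [/esym/eqP|w a]; first by rewrite linv_neq.
rewrite last_rcons => ->; rewrite /wmul last_rcons eqxx size_rcons /=.
by rewrite -cats1 take_cat ltnn subnn take0 cats0 ?cats1.
Qed.

Lemma reduced_wmul w y : reduced w -> reduced (wmul w y).
Proof.
move=> rw; case: (boolP (last y w == linv y)) => [/eqP h|h].
  by move: rw; rewrite {1}(wmul_cancel h) reduced_rcons => /andP[].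
by rewrite /wmul (negbTE h) reduced_rcons rw.
Qed.

Lemma wmulK w y : reduced w -> wmul (wmul w y) (linv y) = w.
Proof.
move=> rw; case: (boolP (last y w == linv y)) => [/eqP h|h].
  have e := wmul_cancel h; set w0 := wmul w y in e *.
  move: rw; rewrite {1}e reduced_rcons => /andP[_ h2].
  by rewrite /wmul (negbTE h2) -e.
by rewrite [wmul w y]/wmul (negbTE h) wmul_rconsK.
Qed.

Lemma size_wmul w y : size (wmul w y) <= (size w).+1.
Proof.
rewrite /wmul; case: ifP => _; last by rewrite size_rcons.
by rewrite size_take; case: ifP => // _; case: (size w) => //= n; rewrite ltnW.
Qed.

Lemma winv_rcons w y : winv (rcons w y) = linv y :: winv w.
Proof. by rewrite /winv map_rcons rev_rcons. Qed.

Lemma winv_cons y w : winv (y :: w) = rcons (winv w) (linv y).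
Proof. by rewrite /winv /= rev_cons. Qed.

Lemma size_winv w : size (winv w) = size w.
Proof. by rewrite /winv size_rev size_map. Qed.

Lemma reduced_winv w : reduced w -> reduced (winv w).
Proof.
move=> rw; rewrite /reduced /winv rev_sorted sorted_map.
by apply: sub_sorted rw => a b /=; rewrite !inv_pairE linvK eq_sym.
Qed.

(* [reduced (c ++ c)] says that [c] is cyclically reduced. *)
Lemma cyclic_reduction w : reduced w -> w != [::] ->
  exists h c, [/\ w = h ++ c ++ winv h, c != [::] & reduced (c ++ c)].
Proof.
elim: {w}(size w) {-2}w (leqnn (size w)) => [|n IH] w.
  by rewrite leqn0 size_eq0 => /eqP ->.
move=> hs rw nw; case: (boolP (reduced (w ++ w))) => [rww|].
  by exists [::], w; rewrite /= cats0.
case: w hs rw nw => [//|a t] hs rw _.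
case/lastP: t hs rw => [|u z] hs rw rww.
  by move: rww; rewrite /reduced /= inv_pairE eq_sym linv_neq.
have hz : z = linv a.
  apply/eqP; apply: contraNT rww => hz.
  rewrite -[a :: rcons u z]/(rcons (a :: u) z) reduced_rcons_cat rw reduced_cons rw /=.
  by rewrite -(inj_eq linv_inj) linvK eq_sym.
subst z; move: rw; rewrite reduced_cons => /andP[rur hh].
case: u hs hh rur {rww} => [|b u] hs hh rur; first by rewrite /= eqxx in hh.
have rbu : reduced (b :: u) by move: rur; rewrite reduced_rcons => /andP[].
have hs' : size (b :: u) <= n by move: hs; rewrite /= size_rcons !ltnS => /ltnW.
have [h [c [e hc rcc]]] := IH (b :: u) hs' rbu isT.
by exists (a :: h), c; rewrite e /= winv_cons -!rcons_cat.
Qed.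

End Words.

Section Reading.
Variable N : nat.
Variable G : RNgraph N.
Implicit Types (w : word N) (y : letter N) (u z c : vert G).

(* Traversing [e] along its orientation reads the letter [(lab e, true)],
   against it [(lab e, false)]. *)
Definition estart (e : edge G) (b : bool) := if b then src e else tgt e.
Definition eend (e : edge G) (b : bool) := if b then tgt e else src e.

Definition step u y : option (vert G) :=
  omap (eend^~ y.2) [pick e | (estart e y.2 == u) && (lab e == y.1)].

Definition read u w : option (vert G) :=
  foldl (fun o y => obind (step^~ y) o) (Some u) w.

Definition letters u : {set letter N} := [set y | step u y != None].

Lemma read_rcons u w y : read u (rcons w y) = obind (step^~ y) (read u w).
Proof. by rewrite /read foldl_rcons. Qed.

Lemma read_cat u w1 w2 : read u (w1 ++ w2) = obind (read^~ w2) (read u w1).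
Proof.
rewrite /read foldl_cat; case: (foldl _ _ w1) => [z|] //=.
by elim: w2.
Qed.

Lemma read_cons u y w : read u (y :: w) = obind (read^~ w) (step u y).
Proof. by rewrite -cat1s read_cat. Qed.

Lemma step_Some u y z : step u y = Some z ->
  exists e, [/\ estart e y.2 = u, lab e = y.1 & eend e y.2 = z].
Proof. by rewrite /step; case: pickP => //= e /andP[/eqP ? /eqP ?] [<-]; exists e. Qed.

Hypothesis li : loc_inj G.

Lemma estart_inj e e' b : lab e = lab e' -> estart e b = estart e' b -> e = e'.
Proof. by move=> /li[]; case: b. Qed.

Lemma step_edge e y : lab e = y.1 -> step (estart e y.2) y = Some (eend e y.2).
Proof.
move=> hl; rewrite /step; case: pickP => [e' /andP[/eqP h1 /eqP h2]|] /=.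
  by rewrite (estart_inj (etrans h2 (esym hl)) h1).
by move/(_ e); rewrite eqxx hl eqxx.
Qed.

Lemma step_linv u y z : step u y = Some z -> step z (linv y) = Some u.
Proof.
case/step_Some => e [h1 h2 h3]; have := @step_edge e (linv y) h2.
by rewrite /linv /=; case: (y.2) h1 h3 => /= -> ->.
Qed.

Lemma read_rcons_linv u w y c :
  read u (rcons w y) = Some c -> read u w = step c (linv y).
Proof. by rewrite read_rcons; case: (read u w) => //= z /step_linv ->. Qed.

Lemma read_winv u w c : read u w = Some c -> read c (winv w) = Some u.
Proof.
elim/last_ind: w c => [|w y IH] c; first by case=> ->.
move=> h; rewrite winv_rcons read_cons -(read_rcons_linv h).
by move: h; rewrite read_rcons; case e: (read u w) => [z|] //= _; rewrite (IH z e).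
Qed.

Lemma read_start_inj u u' w c : read u w = Some c -> read u' w = Some c -> u = u'.
Proof. by move=> /read_winv h /read_winv; rewrite h => -[]. Qed.

Lemma read_wmul u w y c : reduced w -> read u w = Some c ->
  read u (wmul w y) = step c y.
Proof.
move=> rw h; case: (boolP (last y w == linv y)) => [/eqP hl|hl].
  by move: h; rewrite {1}(wmul_cancel hl) => /read_rcons_linv ->; rewrite linvK.
by rewrite /wmul (negbTE hl) read_rcons h.
Qed.

Lemma in_letters u y : (y \in letters u) = (step u y != None).
Proof. by rewrite inE. Qed.

Lemma lettersP u y : reflect (exists e, estart e y.2 = u /\ lab e = y.1) (y \in letters u).
Proof.
rewrite in_letters; apply: (iffP idP).
  by case h: step => [z|] // _; case/step_Some: h => e [? ? _]; exists e.
by case=> e [<- h]; rewrite (step_edge h).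
Qed.

Lemma deg_letters u : deg u = #|letters u|.
Proof.
pose at_u b := [pred e : edge G | estart e b == u].
have card_at b : #|at_u b| = #|letters u :&: [set y | y.2 == b]|.
  rewrite -(card_in_imset (f := fun e => (lab e, b))); last first.
    by move=> e e' /eqP h1 /eqP h2 [h3]; apply: (estart_inj (b := b) h3); rewrite h1 h2.
  congr #|pred_of_set _|; apply/setP => -[i b']; rewrite in_setI [_ \in [set _ | _]]inE /=.
  apply/imsetP/andP => [[e /eqP he [-> ->]]|[/lettersP [e [h1 h2]] /eqP hb]].
    by split => //; apply/lettersP; exists e.
  by exists e; rewrite ?inE -?hb ?h1 ?h2.
rewrite -(cardsID [set y : letter N | y.2] (letters u)) /deg.
rewrite -[#|[pred e | src e == u]|]/#|at_u true| -[#|[pred e | tgt e == u]|]/#|at_u false|.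
rewrite !card_at setDE; congr (_ + _); apply: eq_card => y; rewrite !inE.
  by rewrite eqb_id.
by rewrite eqbF_neg.
Qed.

End Reading.

Section Morphisms.
Variable N : nat.
Variables G H : RNgraph N.
Variables (fV : vert G -> vert H) (fE : edge G -> edge H).
Hypothesis mf : rmorph fV fE.

Lemma rmorph_estart e b : estart (fE e) b = fV (estart e b).
Proof. by have [? ? _] := mf e; case: b. Qed.

Lemma rmorph_eend e b : eend (fE e) b = fV (eend e b).
Proof. by have [? ? _] := mf e; case: b. Qed.

Lemma rmorph_lab e : lab (fE e) = lab e.
Proof. by have [_ _ ->] := mf e. Qed.

Lemma rmorph_edge_inj : loc_inj G -> injective fV -> injective fE.
Proof.
move=> liG fVi e e' he; have hl : lab e = lab e' by rewrite -!rmorph_lab he.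
by apply: (estart_inj liG (b := true) hl); apply: fVi; rewrite -!rmorph_estart he.
Qed.

Hypothesis liH : loc_inj H.

Lemma rmorph_step u y z : step u y = Some z -> step (fV u) y = Some (fV z).
Proof.
case/step_Some => e [<- hl <-]; rewrite -rmorph_estart -rmorph_eend.
by apply: step_edge; rewrite ?rmorph_lab.
Qed.

Lemma rmorph_read u w z : read u w = Some z -> read (fV u) w = Some (fV z).
Proof.
elim/last_ind: w z => [|w y IH] z; first by case=> <-.
rewrite !read_rcons; case h: (read u w) => [z'|] //= hs.
by rewrite (IH _ h) /= (rmorph_step hs).
Qed.

Lemma rmorph_letters u : letters u \subset letters (fV u).
Proof.
apply/subsetP => y; rewrite !in_letters.
by case h: step => [z|] // _; rewrite (rmorph_step h).
Qed.

Hypothesis liG : loc_inj G.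

Lemma rmorph_edge_surj : (forall c, exists x, fV x = c) ->
  (forall x, letters (fV x) \subset letters x) -> forall e, exists t, fE t = e.
Proof.
move=> fVs hL e; have [x hx] := fVs (src e).
have /lettersP[// | t [/= ht hl]] : (lab e, true) \in letters x.
  by apply: (subsetP (hL x)); apply/lettersP => //; exists e; rewrite hx.
exists t.
by apply: (estart_inj liH (b := true)); rewrite ?rmorph_lab // rmorph_estart /= ht hx.
Qed.

Lemma iso_letters : bijective fV -> bijective fE -> forall x, letters (fV x) \subset letters x.
Proof.
case=> gV fVK gVK [gE fEK gEK] x; apply/subsetP => y /lettersP[// | e [he hl]].
apply/lettersP => //; exists (gE e); split; last by rewrite -(rmorph_lab (gE e)) gEK.
by apply: (can_inj fVK); rewrite -rmorph_estart gEK.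
Qed.

Lemma rmorph_letters_eq u : deg (fV u) = deg u -> letters (fV u) = letters u.
Proof.
move=> hd; apply/eqP; rewrite eq_sym eqEcard rmorph_letters /=.
by rewrite -(deg_letters liH) hd (deg_letters liG).
Qed.

End Morphisms.

Section TreeGraph.
Variable N : nat.
Variable T : seq (word N).
Hypothesis hT : subtreeX T.
Notation TG := (tree_graph T).
Implicit Types (x z : vert TG) (y : letter N).

Lemma tree_reduced x : reduced (ssval x).
Proof. by case: hT => h _ _; apply: h; exact: ssvalP. Qed.

Lemma tree_loc_inj : loc_inj TG.
Proof.
move=> [[[s t] i] hh] [[[s' t'] i'] hh'] /= hl; subst i'.
have /= h := eqP hh; have /= h' := eqP hh'.
split=> [es|et]; subst; apply: val_inj; congr (_, _, _) => //=;
  apply: (val_inj : injective (@ssval _ T)); first by rewrite h h'.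
rewrite -(wmulK (i, true) (tree_reduced s)) -(wmulK (i, true) (tree_reduced s')).
by congr wmul; exact: (etrans (esym h) h').
Qed.

Lemma tree_step x y z : step x y = Some z -> ssval z = wmul (ssval x) y.
Proof.
case/step_Some => -[[[s t] i] hh] []; have /= h := eqP hh.
case: y => j [] /= <- <- <- //=.
rewrite h -[rmul _ _]/(wmul _ (i, true)) -[(i, false)]/(linv (i, true)).
by rewrite wmulK // tree_reduced.
Qed.

Lemma tree_step_mem x y (h : wmul (ssval x) y \in T) : step x y = Some (SeqSub h).
Proof.
case: y h => i [] h.
  have he : ssval (SeqSub h) == rmul (ssval x) i by [].
  exact: (@step_edge _ _ tree_loc_inj (exist _ (x, SeqSub h, i) he) (i, true)).
have he : ssval x == rmul (ssval (SeqSub h)) i.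
  rewrite /= -[rmul _ _]/(wmul _ (i, true)) -[(i, true)]/(linv (i, false)).
  by rewrite wmulK ?tree_reduced.
exact: (@step_edge _ _ tree_loc_inj (exist _ (SeqSub h, x, i) he) (i, false)).
Qed.

Lemma tree_letters x y : (y \in letters x) = (wmul (ssval x) y \in T).
Proof.
rewrite in_letters; apply/idP/idP; last by move=> h; rewrite (tree_step_mem h).
by case e: step => [z|] // _; rewrite -(tree_step e) ssvalP.
Qed.

Lemma tree_deg x : deg x = #|letters x|.
Proof. exact: (deg_letters tree_loc_inj). Qed.

Lemma tree_parent_letter x p a : ssval x = rcons p a -> linv a \in letters x.
Proof.
move=> e; rewrite tree_letters e wmul_rconsK.
by case: hT => _ _ /(_ p a); apply; rewrite -e ssvalP.
Qed.

Lemma tree_read_root x0 : ssval x0 = [::] -> forall x, read x0 (ssval x) = Some x.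
Proof.
move=> h0; suff H w (h : w \in T) : read x0 w = Some (SeqSub h) by case=> w h; rewrite H.
elim/last_ind: w h => [|w y IH] h; first by congr Some; apply: val_inj.
have hw : w \in T by case: hT => _ _; apply; exact: h.
have rw : reduced (rcons w y) by case: hT => hr _ _; exact: hr.
have hm : wmul (ssval (SeqSub hw)) y \in T by rewrite /= wmul_rcons.
rewrite read_rcons (IH hw) /= (tree_step_mem hm); congr Some; apply: val_inj.
by rewrite /= wmul_rcons.
Qed.

Lemma rmorph_tree_read (H : RNgraph N) fV fE : @rmorph N TG H fV fE -> loc_inj H ->
  forall x0, ssval x0 = [::] -> forall x, read (fV x0) (ssval x) = Some (fV x).
Proof. by move=> mf liH x0 h0 x; apply: (rmorph_read mf liH); exact: tree_read_root. Qed.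

Lemma tree_rmorph_of_read (D : RNgraph N) (b : vert D) (fV : vert TG -> vert D) :
  loc_inj D -> (forall x, read b (ssval x) = Some (fV x)) -> exists fE, rmorph fV fE.
Proof.
move=> liD hfV.
have exE (t : edge TG) : exists e : edge D,
    [&& src e == fV (src t), tgt e == fV (tgt t) & lab e == lab t].
  case: t => -[[x z] i] /= /eqP hz.
  have := hfV z; rewrite hz -[rmul _ _]/(wmul _ (i, true)).
  rewrite (read_wmul liD _ (tree_reduced x) (hfV x)).
  by case/step_Some => e [/= h1 h2 h3]; exists e; rewrite h1 h2 h3 !eqxx.
exists (fun t => xchoose (exE t)) => t.
by have /and3P[/eqP -> /eqP -> /eqP ->] := xchooseP (exE t).
Qed.

End TreeGraph.

Section Neighbourhood.
Variable N : nat.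
Variable m : nat.

Section Rm.
Variable T : seq (word N).
Hypothesis hRm : in_Rm m T.
Let hT : subtreeX T. Proof. by case: hRm. Qed.
Notation TG := (tree_graph T).

Lemma in_Rm_size (x : vert TG) : size (ssval x) <= m.
Proof.
(* A longest word of [T] is a leaf. *)
have [x0 _] : exists x0 : vert TG, true by case: hT => _ h _; exists (SeqSub h).
case: (@arg_maxnP _ x0 predT (fun x => size (ssval x)) isT) => xm _ hmax.
apply: leq_trans (hmax x isT) _; case/lastP e: (ssval xm) => [//|p a].
rewrite -e; case: hRm => _ _ -> //; rewrite tree_deg //.
apply/eqP/cards1P; exists (linv a); apply/setP => y; rewrite inE.
case: (eqVneq y (linv a)) => [->|ne]; first exact: tree_parent_letter e.
have hay : a != linv y by apply: contra ne => /eqP ->; rewrite linvK.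
rewrite tree_letters // e /wmul last_rcons (negbTE hay).
by apply/negP => hin; have := hmax (SeqSub hin) isT; rewrite /= e !size_rcons ltnn.
Qed.

Lemma in_Rm_deg (x : vert TG) : size (ssval x) < m -> 2 <= deg x.
Proof.
case/lastP e: (ssval x) => [|p a] hs; first by case: hRm => _ ->.
have : 0 < #|letters x| by apply/card_gt0P; exists (linv a); exact: tree_parent_letter e.
rewrite tree_deg // leq_eqVlt eq_sym; case: ltngtP => // h1 _.
by case: hRm => _ _ /(_ x); rewrite tree_deg // -h1 e => /(_ erefl) hm; rewrite hm ltnn in hs.
Qed.

End Rm.

Variable D : RNgraph N.
Hypothesis liD : loc_inj D.
Variable v : vert D.

Lemma is_Tm_mem T1 w : is_Tm m v T1 ->
  (w \in T1) = [&& reduced w, size w <= m & read v w != None].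
Proof.
case=> hRm [fV [fE [mf hv hdeg]]]; have hT : subtreeX T1 by case: hRm.
have hnil : [::] \in T1 by case: hT.
have hrd (x : vert (tree_graph T1)) : read v (ssval x) = Some (fV x).
  by rewrite -(hv (SeqSub hnil) erefl); apply: (rmorph_tree_read hT mf liD).
apply/idP/idP => [hw|].
  have := in_Rm_size hRm (SeqSub hw); have := hrd (SeqSub hw).
  by have := tree_reduced hT (SeqSub hw); rewrite /= => -> -> ->.
elim/last_ind: w => [|u y IH]; first by rewrite hnil.
rewrite reduced_rcons size_rcons read_rcons => /and3P[/andP[ru hl] hs hre].
have hu : u \in T1 by apply: IH; rewrite ru ltnW //=; case: (read v u) hre.
pose xu : vert (tree_graph T1) := SeqSub hu.
have : y \in letters (fV xu) by move: hre; rewrite in_letters (hrd xu : read v u = _).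
rewrite (rmorph_letters_eq mf liD (tree_loc_inj hT)) ?hdeg ?(in_Rm_deg hRm) //.
by rewrite tree_letters //= /wmul (negbTE hl).
Qed.

Definition ball_words (k : nat) : seq (word N) :=
  flatten [seq [seq tval t | t <- enum {: j.-tuple (letter N)}] | j <- iota 0 k.+1].

Lemma mem_ball_words k w : (w \in ball_words k) = (size w <= k).
Proof.
apply/flattenP/idP => [[s /mapP [j hj ->] /mapP [t _ ->]]|hw].
  by move: hj; rewrite mem_iota size_tuple add0n ltnS => /andP[].
exists [seq tval t | t <- enum {: (size w).-tuple (letter N)}].
  by apply/mapP; exists (size w) => //; rewrite mem_iota add0n ltnS.
by apply/mapP; exists (in_tuple w); rewrite ?mem_enum.
Qed.

Definition canonT : seq (word N) :=
  [seq w <- ball_words m | reduced w && (read v w != None)].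

Lemma mem_canonT w : (w \in canonT) = [&& reduced w, size w <= m & read v w != None].
Proof. by rewrite mem_filter mem_ball_words andbAC -andbA. Qed.

Lemma canonT_subtree : subtreeX canonT.
Proof.
split=> [w||w x]; rewrite !mem_canonT //; first by case/and3P.
rewrite reduced_rcons size_rcons read_rcons.
by case/and3P => /andP[-> _] /ltnW -> /=; case: (read v w).
Qed.

Notation CT := (tree_graph canonT).

Definition canon_map (x : vert CT) : vert D := odflt v (read v (ssval x)).

Lemma canon_read (x : vert CT) : read v (ssval x) = Some (canon_map x).
Proof.
have := ssvalP x; rewrite mem_canonT => /and3P[_ _].
by rewrite /canon_map; case: (read v _).
Qed.

Lemma canonT_size (x : vert CT) : size (ssval x) <= m.
Proof. by have := ssvalP x; rewrite mem_canonT => /and3P[]. Qed.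

Lemma canonT_letters (x : vert CT) :
  size (ssval x) < m -> letters x = letters (canon_map x).
Proof.
move=> hx; apply/setP => y; rewrite (tree_letters canonT_subtree) in_letters.
rewrite mem_canonT reduced_wmul ?(tree_reduced canonT_subtree) //.
rewrite (leq_trans (size_wmul _ _) hx) /=.
by rewrite (read_wmul liD y (tree_reduced canonT_subtree x) (canon_read x)).
Qed.

Lemma canonT_leaf_letters (x : vert CT) : 0 < m -> size (ssval x) = m -> #|letters x| <= 1.
Proof.
case/lastP e: (ssval x) => [|p a] hm hx; first by rewrite -hx in hm.
rewrite -(cards1 (linv a)); apply/subset_leq_card/subsetP => y.
rewrite (tree_letters canonT_subtree) mem_canonT inE => /and3P[_ hs _].
apply/negPn/negP => ne; have hay : a != linv y by apply: contra ne => /eqP ->; rewrite linvK.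
by move: hs; rewrite e /wmul last_rcons (negbTE hay) -hx !size_rcons ltnn.
Qed.

Lemma canonT_is_Tm : core_graph D -> 0 < m -> is_Tm m v canonT.
Proof.
case=> _ hdegD hm; have hT := canonT_subtree.
have inner (x : vert CT) : 2 <= deg x -> size (ssval x) < m.
  rewrite tree_deg // => h2; rewrite ltn_neqAle canonT_size andbT.
  by apply/eqP => /(canonT_leaf_letters hm); rewrite leqNgt h2.
have hdeg (x : vert CT) : size (ssval x) < m -> deg x = deg (canon_map x).
  by move=> hx; rewrite tree_deg // canonT_letters // (deg_letters liD).
split; first split => // x.
- by move=> hx; rewrite hdeg ?hx.
- move=> hx; apply/eqP; rewrite eqn_leq canonT_size leqNgt; apply/negP => hlt.
  by have := hdegD (canon_map x); rewrite -hdeg // hx.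
have [fE mf] := tree_rmorph_of_read hT liD canon_read.
exists canon_map, fE; split => // [x hx|x /inner hx]; last by rewrite hdeg.
by have := canon_read x; rewrite hx => -[].
Qed.

End Neighbourhood.

Section FiberProduct.
Variable N : nat.
Variables D1 D2 : RNgraph N.
Notation F := (fiber_product D1 D2).

Definition opair (A B : Type) (o1 : option A) (o2 : option B) : option (A * B) :=
  if o1 is Some a then omap (pair a) o2 else None.

Lemma fiber_rmorph1 : rmorph (G := F) (fun p => p.1) (fun p => (val p).1).
Proof. by []. Qed.

Lemma fiber_rmorph2 : rmorph (G := F) (fun p => p.2) (fun p => (val p).2).
Proof. by case=> p /= /eqP hl; split. Qed.

Hypotheses (l1 : loc_inj D1) (l2 : loc_inj D2).

Lemma fiber_loc_inj : loc_inj F.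
Proof.
move=> [[e1 e2] /= hh] [[e1' e2'] /= hh'] /= hl.
have hl2 : lab e2 = lab e2' by rewrite -(eqP hh) -(eqP hh').
have [a1 b1] := l1 hl; have [a2 b2] := l2 hl2.
by split=> -[s1 s2]; apply: val_inj; rewrite /= ?(a1 s1, a2 s2) ?(b1 s1, b2 s2).
Qed.

Lemma fiber_step a b y :
  step (G := F) ((a, b) : fib_vert D1 D2) y = opair (step a y) (step b y).
Proof.
case h: (step (G := F) _ y) => [[a' b']|].
  by rewrite (rmorph_step fiber_rmorph1 l1 h) (rmorph_step fiber_rmorph2 l2 h).
case e1: (step a y) => [a'|] //; case e2: (step b y) => [b'|] //=.
case/step_Some: e1 => f1 [h1 h2 h3]; case/step_Some: e2 => f2 [k1 k2 k3].
have hh : lab (f1, f2).1 == lab (f1, f2).2 by rewrite /= h2 k2.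
move: h; have := step_edge fiber_loc_inj (e := exist _ (f1, f2) hh) h2.
by case: (y.2) h1 k1 => /= <- <- ->.
Qed.

Lemma fiber_read a b w :
  read (G := F) ((a, b) : fib_vert D1 D2) w = opair (read a w) (read b w).
Proof.
elim/last_ind: w => [|w y IH] //; rewrite !read_rcons IH.
case: (read a w) => [x|] //; case: (read b w) => [z|] /=; last by case: (step x y).
exact: fiber_step.
Qed.

Lemma fiber_readable a b w :
  (read (G := F) ((a, b) : fib_vert D1 D2) w != None) =
  (read a w != None) && (read b w != None).
Proof. by rewrite fiber_read; case: (read a w) => [x|]; case: (read b w). Qed.

End FiberProduct.

Section BoundedReading.
Variable N : nat.
Variable G : RNgraph N.
Hypothesis li : loc_inj G.
Variable b : vert G.
Variable K : nat.
Hypothesis read_bounded : forall w, reduced w -> read b w != None -> size w <= K.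

(* A reduced loop [h c h^-1] at [b] with [c] cyclically reduced could be
   pumped to the arbitrarily long reduced words [h c^k], all readable. *)
Lemma no_reduced_loop g : reduced g -> g != [::] -> read b g = Some b -> False.
Proof.
move=> rg ng; have [h [c [e hc rcc]]] := cyclic_reduction rg ng.
rewrite e read_cat; case hh: (read b h) => [z|] //=.
rewrite read_cat; case hcz: (read z c) => [z'|] //= hz'.
have ez : z' = z by apply: (read_start_inj li hz'); exact: read_winv hh.
subst z'.
case/lastP: c e hc rcc hcz => [//|c0 x] e _ rcc hcz; set c := rcons c0 x in e rcc hcz *.
pose pump k := iter k (cat^~ c) c.
have read_pump k : read z (pump k) = Some z by elim: k => //= k IHk; rewrite read_cat IHk.
have size_pump k : k < size (pump k).
  by elim: k => [|k IHk]; rewrite /= ?size_cat ?size_rcons // -addn1 leq_add.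
have reduced_pump k : reduced (h ++ pump k).
  elim: k => [|k IHk]; first by move: rg; rewrite e catA => /cat_sorted2[].
  have [s es] : exists s, h ++ pump k = rcons s x.
    by case: k {IHk} => [|k]; [exists (h ++ c0) | exists (h ++ pump k ++ c0)];
      rewrite /= -?catA /c ?rcons_cat.
  rewrite /= catA es reduced_rcons_cat -es IHk.
  by move: rcc; rewrite /c reduced_rcons_cat => /andP[].
have := read_bounded (reduced_pump K); rewrite read_cat hh /= read_pump => /(_ isT).
by rewrite size_cat leqNgt ltn_addl.
Qed.

(* After cancelling their common last letters, two distinct words reading to
   [c] give the nontrivial reduced loop [w1 w2^-1] at [b]. *)
Lemma read_inj w1 w2 c : reduced w1 -> reduced w2 ->
  read b w1 = Some c -> read b w2 = Some c -> w1 = w2.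
Proof.
elim: {w1 w2}(size w1 + size w2) {-2}w1 {-2}w2 c (leqnn (size w1 + size w2))
  => [|n IH] w1 w2 c.
  by rewrite leqn0 addn_eq0 !size_eq0 => /andP[/eqP -> /eqP ->].
case/lastP: w1 => [|u1 y1] hs r1 r2 h1 h2.
  case: (eqVneq w2 [::]) => // nw2; case: (no_reduced_loop (reduced_winv r2)).
    by rewrite -size_eq0 size_winv size_eq0.
  have hc : c = b by case: h1.
  by subst c; exact: (read_winv li h2).
case/lastP: w2 hs r2 h2 => [|u2 y2] hs r2 h2.
  by case: (no_reduced_loop r1); rewrite ?h1 -?h2 // -size_eq0 size_rcons.
case: (eqVneq y1 y2) => [ey|ney]; first subst y2.
  have := read_rcons_linv li h1; have := read_rcons_linv li h2.
  case e1: (read b u1) => [z|]; last by move: h1; rewrite read_rcons e1.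
  move=> h2' h1'; rewrite -h1' in h2'; congr rcons; apply: (IH _ _ z) => //.
  - by move: hs; rewrite !size_rcons addSn addnS ltnS => /ltnW.
  - by move: r1; rewrite reduced_rcons => /andP[].
  - by move: r2; rewrite reduced_rcons => /andP[].
case: (no_reduced_loop (g := rcons u1 y1 ++ winv (rcons u2 y2))).
- have := reduced_winv r2; rewrite winv_rcons => hr.
  by rewrite reduced_rcons_cat r1 reduced_cons hr /= (inj_eq (@linv_inj _)) eq_sym.
- by case: u1 {hs r1 h1}.
- by rewrite read_cat h1 /= (read_winv li h2).
Qed.

End BoundedReading.

Lemma inj_surj_bij (A B : finType) (f : A -> B) :
  injective f -> (forall y, exists x, f x = y) -> bijective f.
Proof.
move=> fi fs; have fs' y : exists x, f x == y by have [x <-] := fs y; exists x.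
exists (fun y => xchoose (fs' y)) => [x|y]; last exact/eqP/(xchooseP (fs' y)).
by apply: fi; exact/eqP/(xchooseP (fs' (f x))).
Qed.

Section BasedIso.
Variable N : nat.
Variable G : RNgraph N.
Hypothesis li : loc_inj G.
Variable b : vert G.
Variable T : seq (word N).
Hypothesis hT : subtreeX T.
Notation TG := (tree_graph T).

Lemma based_iso_read fV fE : @riso N TG G fV fE ->
  (forall x, ssval x = [::] -> fV x = b) ->
  forall w, reduced w -> (read b w != None) = (w \in T).
Proof.
move=> [mf bV bE] hroot; have hnil : [::] \in T by case: hT.
have hrd (x : vert TG) : read b (ssval x) = Some (fV x).
  by rewrite -(hroot (SeqSub hnil) erefl); apply: (rmorph_tree_read hT mf li).
elim/last_ind => [|u y IH] rw; first by rewrite hnil.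
apply/idP/idP => [|hw]; last by have := hrd (SeqSub hw) => /= ->.
have ru : reduced u by move: rw; rewrite reduced_rcons => /andP[].
rewrite read_rcons; case hu': (read b u) => [z|] // hst.
have hu : u \in T by rewrite -IH // hu'.
pose xu : vert TG := SeqSub hu.
have ez : fV xu = z by move: (hrd xu); rewrite /= hu' => -[].
have /(subsetP (iso_letters mf li (tree_loc_inj hT) bV bE xu)) : y \in letters (fV xu).
  by rewrite in_letters ez.
by rewrite tree_letters //= wmul_rcons.
Qed.

Variable r : nat.
Hypothesis hTr : in_ball r T.
Hypothesis ball_read :
  forall w, reduced w -> size w <= r.+1 -> (read b w != None) = (w \in T).

(* Since [T] lies in [B(1, r)], no readable word has length [r + 1], hence
   none is longer than [r]. *)
Lemma ball_read_bounded w : reduced w -> read b w != None -> size w <= r.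
Proof.
move=> rw hw; rewrite leqNgt; apply/negP => hlt.
have e := cat_take_drop r.+1 w.
have rt : reduced (take r.+1 w) by move: rw; rewrite -{1}e => /cat_sorted2[].
have st : size (take r.+1 w) = r.+1 by rewrite size_takel.
have : read b (take r.+1 w) != None by move: hw; rewrite -{1}e read_cat; case: read.
by rewrite ball_read ?st // => /hTr; rewrite st ltnn.
Qed.

Lemma ball_readE w : reduced w -> (read b w != None) = (w \in T).
Proof.
move=> rw; apply/idP/idP => hw.
  by rewrite -ball_read ?(leq_trans (ball_read_bounded rw hw)).
by rewrite ball_read // (leq_trans (hTr hw)).
Qed.

Hypothesis reach : forall c, exists w, reduced w /\ read b w = Some c.

Lemma based_iso_of_read :
  exists fV fE, @riso N TG G fV fE /\ forall x, ssval x = [::] -> fV x = b.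
Proof.
pose fV (x : vert TG) := odflt b (read b (ssval x)).
have hfV x : read b (ssval x) = Some (fV x).
  by have := ssvalP x; rewrite -ball_readE ?tree_reduced // /fV; case: read.
have [fE mf] := tree_rmorph_of_read hT li hfV.
have fVi : injective fV.
  move=> x x' e; apply: val_inj; apply: (read_inj li ball_read_bounded) (hfV x) _;
    by rewrite ?tree_reduced // hfV e.
have fVs c : exists x, fV x = c.
  have [w [rw hw]] := reach c; have hwT : w \in T by rewrite -ball_readE ?hw.
  by exists (SeqSub hwT); have := hfV (SeqSub hwT); rewrite /= hw => -[].
have hL x : letters (fV x) \subset letters x.
  apply/subsetP => y; rewrite in_letters tree_letters // -ball_readE.
    by rewrite (read_wmul li y (tree_reduced hT x) (hfV x)).
  exact/reduced_wmul/tree_reduced.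
exists fV, fE; split; last by move=> x hx; have := hfV x; rewrite hx => -[].
split=> //; first exact: inj_surj_bij.
apply: inj_surj_bij; first exact: rmorph_edge_inj (tree_loc_inj hT) fVi.
exact: rmorph_edge_surj mf li (tree_loc_inj hT) fVs hL.
Qed.

End BasedIso.

Section Component.
Variable N : nat.
Variable G : RNgraph N.
Hypothesis li : loc_inj G.
Variable b : vert G.
Notation C := (component b).
Notation reachable := (connect (@adj N G) b).

Definition component_root : vert C := exist _ b (connect0 _ b).

Lemma component_loc_inj : loc_inj C.
Proof.
move=> [[[s t] e] /= hh] [[[s' t'] e'] /= hh'] /= hl.
have /andP[/eqP h1 /eqP h2] := hh; have /andP[/eqP h1' /eqP h2'] := hh'.
have [a1 a2] := li hl.
split=> hst; subst.
  have ee := a1 (etrans h1 (esym h1')); subst e'.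
  have et : t = t' by apply: val_inj; exact: etrans (esym h2) h2'.
  by subst t'; apply: val_inj.
have ee := a2 (etrans h2 (esym h2')); subst e'.
have es : s = s' by apply: val_inj; exact: etrans (esym h1) h1'.
by subst s'; apply: val_inj.
Qed.

Lemma component_incl : rmorph (G := C) val (fun t => (val t).2).
Proof. by case=> -[[s t] e] /= /andP[/eqP h1 /eqP h2]; split. Qed.

Lemma reachable_read c : reachable c -> exists w, reduced w /\ read b w = Some c.
Proof.
case/connectP => p; elim/last_ind: p c => [|p z IH] c; first by move=> _ ->; exists [::].
rewrite rcons_path last_rcons => /andP[hp /existsP[e he]] ->.
have [w [rw hw]] := IH _ hp erefl.
have [y hy] : exists y, step (last b p) y = Some z.
  case/orP: he => /andP[/eqP <- /eqP <-].
    by exists (lab e, true); exact: step_edge.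
  by exists (lab e, false); exact: step_edge.
by exists (wmul w y); rewrite reduced_wmul // (read_wmul li y rw hw).
Qed.

Lemma component_step (c : vert C) y : omap val (step c y) = step (val c) y.
Proof.
case h: (step c y) => [c'|] /=; first by rewrite (rmorph_step component_incl li h).
case h': (step (val c) y) => [z|] //; case/step_Some: h' => e [h1 h2 h3].
have hadj : @adj N G (src e) (tgt e) by apply/existsP; exists e; rewrite !eqxx.
have hadj' : @adj N G (tgt e) (src e) by apply/existsP; exists e; rewrite !eqxx orbT.
have hc : reachable (estart e y.2) by rewrite h1; exact: valP c.
have hs : reachable (src e).
  by case: (y.2) hc => //= hc; exact: connect_trans hc (connect1 hadj').
have ht : reachable (tgt e) by apply: connect_trans hs (connect1 hadj).
pose sC : vert C := exist _ (src e) hs; pose tC : vert C := exist _ (tgt e) ht.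
have he : (src e == val sC) && (tgt e == val tC) by rewrite !eqxx.
pose eC : edge C := exist _ (sC, tC, e) he.
have := step_edge component_loc_inj (e := eC) (y := y) h2.
have -> : estart eC y.2 = c by apply: val_inj; case: (y.2) h1.
by rewrite h.
Qed.

Lemma component_read (c : vert C) w : omap val (read c w) = read (val c) w.
Proof.
elim/last_ind: w => [|w y IH] //; rewrite !read_rcons -IH.
by case: (read c w) => [c1|] //=; rewrite component_step.
Qed.

Lemma component_reach (c : vert C) :
  exists w, reduced w /\ read component_root w = Some c.
Proof.
have [w [rw hw]] := reachable_read (valP c); exists w; split => //.
have := component_read component_root w; rewrite hw.
by case: read => //= c' [e]; congr Some; apply: val_inj.
Qed.

Lemma component_readable w : (read component_root w != None) = (read b w != None).
Proof. by rewrite -(component_read component_root w); case: read. Qed.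

Lemma component_based_iso_iff r T : subtreeX T -> in_ball r T ->
  (exists (fV : vert (tree_graph T) -> vert C) fE,
     riso fV fE /\ forall x, ssval x = [::] -> val (fV x) = b) <->
  (forall w, reduced w -> size w <= r.+1 -> (read b w != None) = (w \in T)).
Proof.
move=> hT hTr; split=> [[fV [fE [iso hroot]]] w rw _|hball].
  rewrite -component_readable; apply: (based_iso_read component_loc_inj hT iso) => // x hx.
  by apply: val_inj; rewrite hroot.
have [fV [fE [iso hroot]]] := based_iso_of_read component_loc_inj hT hTr
  (fun w rw hw => etrans (component_readable w) (hball w rw hw)) component_reach.
by exists fV, fE; split => // x /hroot ->.
Qed.

End Component.

Unset Implicit Arguments. Set Strict Implicit.

Theorem mainTheorem12 (N : nat) (hN : 2 <= N) (r : nat) (T : seq (word N))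
    (hT : subtreeX T) (hTr : in_ball r T)
    (D1 D2 : RNgraph N) (hD1 : core_graph D1) (hD2 : core_graph D2)
    (v1 : vert D1) (v2 : vert D2) :
  (exists T1 T2, is_Tm r.+1 v1 T1 /\ is_Tm r.+1 v2 T2) /\
  (forall T1 T2 : seq (word N), is_Tm r.+1 v1 T1 -> is_Tm r.+1 v2 T2 ->
     (based_iso_to_Gamma T v1 v2 <->
      forall w : word N, (w \in T1) && (w \in T2) = (w \in T))).
Proof.
have [l1 l2] : loc_inj D1 /\ loc_inj D2 by case: hD1; case: hD2.
split; first by exists (canonT r.+1 v1), (canonT r.+1 v2); split; exact: canonT_is_Tm.
move=> T1 T2 h1 h2.
apply: iff_trans (component_based_iso_iff (fiber_loc_inj l1 l2) _ hT hTr) _.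
have memT12 w : (w \in T1) && (w \in T2) =
    [&& reduced w, size w <= r.+1 & read (G := fiber_product D1 D2) (v1, v2) w != None].
  rewrite (is_Tm_mem l1 _ h1) (is_Tm_mem l2 _ h2) fiber_readable //.
  by case: (reduced w); case: (size w <= r.+1).
have [hTred _ _] := hT.
split=> H w; rewrite ?memT12.
  case rw: (reduced w); last by apply/esym/negP => /hTred; rewrite rw.
  case sw: (size w <= r.+1); first by rewrite H.
  by apply/esym/negP => /hTr /leqW; rewrite sw.
by move=> rw sw; rewrite -H memT12 rw sw.
Qed.
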